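(* Let $n\ge 3$ and $f=x^n+a_{n-1}x^{n-1}+\cdots+a_0\in\mathbb{C}[x]$ with roots $r_1,\ldots,r_n$ (with multiplicity). For each integer $m$ put $\varphi_m(x)=f^{(m)}(x)/m!$ if $1\le m\le n$ and $\varphi_m=0$ if $m\le 0$ or $m>n$. Let $M$ be the infinite matrix with entries $M_{2s-1,l}=\varphi_{2(l-s)+2}$, $M_{2s,l}=\varphi_{2(l-s)+1}$ ($s,l\ge1$), and let $H(x)$ be its $(n-2)$th leading principal minor. If indices $i,j,k\in\{1,\ldots,n\}$ satisfy $i<j$, $j\ne k$, $k\ne i$ and $r_k=(r_i+r_j)/2$, then $H(r_k)=0$.
   Context: $f^{(m)}$ is the $m$th derivative of $f$ with respect to $x$. *)

From Stdlib Require Reals.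
From HB Require Import structures.
From mathcomp Require Import all_boot all_order all_algebra.
From mathcomp Require Import complex.
From mathcomp Require Import Rstruct.

Set Implicit Arguments. Unset Strict Implicit. Unset Printing Implicit Defensive.
Import Order.TTheory GRing.Theory Num.Theory.
Local Open Scope ring_scope.

Definition C : numClosedFieldType := (Rdefinitions.R)[i].

Definition phi (n : nat) (f : {poly C}) (m : int) : {poly C} :=
  match m with
  | Posz k => if (1 <= k <= n)%N then f^`N(k) else 0
  | Negz _ => 0
  end.

(* Entry M_{r,l} of the infinite matrix (1-based indices r, l >= 1):
   M_{2s-1,l} = phi_{2(l-s)+2},  M_{2s,l} = phi_{2(l-s)+1}. *)
Definition Mentry (n : nat) (f : {poly C}) (r l : nat) : {poly C} :=
  if odd r then
    let s := (r.+1)./2 in phi n f (2 * (l%:Z - s%:Z) + 2)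
  else
    let s := r./2 in phi n f (2 * (l%:Z - s%:Z) + 1).

Definition Hpoly (n : nat) (f : {poly C}) : {poly C} :=
  \det (\matrix_(i < n - 2, j < n - 2) Mentry n f i.+1 j.+1).

From HB Require Import structures.
From mathcomp Require Import all_boot all_order all_algebra.
From mathcomp Require Import complex.
From mathcomp Require Import zify ring.
Import Order.TTheory GRing.Theory Num.Theory.
Local Open Scope ring_scope.

(* Put c = r_k, d = (r_j - r_i)/2 and u = d^2.  Then f(x + c) = x h(x) with
   h(x) = (x^2 - u) q(x), and phi_m(c), the m-th Taylor coefficient of f at c,
   is the (m-1)-th coefficient of h.  Writing h(x) = E(x^2) + x O(x^2), both E
   and O vanish at u.  Row 2s+1 (resp. 2s+2) of M(c) is the coefficient
   sequence of O (resp. E) shifted right by s, and for rows of the leading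
   (n-2)-block it fits inside the first n-2 columns, so that block kills the
   column vector (1, u, ..., u^(n-3)) and H(c) = 0. *)

Lemma coef_comp_poly_XaddC (R : comNzRingType) (p : {poly R}) (c : R) k :
  (p \Po ('X + c%:P))`_k = p^`N(k).[c].
Proof.
elim/poly_ind: p k => [|p a IHp] k.
  by rewrite comp_poly0 coef0 nderivn_poly0 ?size_poly0 ?horner0.
rewrite comp_polyD comp_polyM comp_polyX comp_polyC mulrDr !coefD coefMX.
rewrite coefMC coefC; case: k => [|k] /=.
  by rewrite !nderivn0 !hornerE IHp nderivn0.
by rewrite nderivnMXaddC !hornerE !IHp.
Qed.

Lemma comp_XaddC_symmetric_roots (R : comNzRingType) (c d : R) (q : {poly R}) :
  (('X - (c - d)%:P) * ('X - (c + d)%:P) * ('X - c%:P) * q) \Po ('X + c%:P)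
  = (q \Po ('X + c%:P)) * ('X^2 - (d ^+ 2)%:P) * 'X.
Proof.
rewrite !comp_polyM !comp_polyB !comp_polyX !comp_polyC polyCB polyCD rmorphXn.
ring.
Qed.

Lemma even_polyMX2subC (R : comNzRingType) (q : {poly R}) (u : R) :
  even_poly (q * ('X^2 - u%:P)) = even_poly q * ('X - u%:P).
Proof.
rewrite !mulrBr !linearB /= ![_ * u%:P]mulrC !mul_polyC linearZ /=.
by rewrite expr2 mulrA even_polyMX odd_polyMX.
Qed.

Lemma odd_polyMX2subC (R : comNzRingType) (q : {poly R}) (u : R) :
  odd_poly (q * ('X^2 - u%:P)) = odd_poly q * ('X - u%:P).
Proof.
rewrite !mulrBr !linearB /= ![_ * u%:P]mulrC !mul_polyC linearZ /=.
by rewrite expr2 mulrA odd_polyMX even_polyMX.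
Qed.

Lemma sum_shifted_coef (R : comNzRingType) (p : {poly R}) (x : R) (s N : nat) :
  (size p + s <= N)%N ->
  \sum_(l < N) x ^+ l * (if (s <= l)%N then p`_(l - s) else 0) = x ^+ s * p.[x].
Proof.
move=> leN; have sN : (s <= N)%N by apply: leq_trans leN; rewrite leq_addl.
rewrite -(subnKC sN) big_split_ord /= big1 ?add0r => [|l _]; last first.
  by rewrite leqNgt ltn_ord mulr0.
rewrite (horner_coef_wide _ (n := N - s)) ?leq_subRL ?(addnC s) // mulr_sumr.
by apply: eq_bigr => l _; rewrite leq_addr addKn exprD -mulrA [p`_l * _]mulrC.
Qed.

Lemma horner_phi_nonpos (n : nat) (f : {poly C}) (z : int) (c : C) :
  z <= 0 -> (phi n f z).[c] = 0.
Proof. by case: z => [[|m]|m] //; rewrite horner0. Qed.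

Section MatrixAtShiftedRoot.
Variables (n : nat) (f h : {poly C}) (c : C).
Hypotheses (size_f : (size f <= n.+1)%N) (f_shift : f \Po ('X + c%:P) = h * 'X).

Lemma size_shift_quot : (size h <= n)%N.
Proof.
have [->|h_neq0] := eqVneq h 0; first by rewrite size_poly0.
by rewrite -ltnS -size_mulX // -f_shift size_comp_poly2 ?size_XaddC.
Qed.

Lemma horner_phi_pos m : (phi n f m.+1%:Z).[c] = h`_m.
Proof.
have -> : h`_m = (f \Po ('X + c%:P))`_m.+1 by rewrite f_shift coefMX.
rewrite /= (@coef_comp_poly_XaddC C); case: ltnP => // le_nm.
by rewrite horner0 nderivn_poly0 ?horner0 // (leq_trans size_f).
Qed.

Lemma horner_Mentry_odd_row (s l : nat) :
  (Mentry n f s.*2.+1 l.+1).[c]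
  = if (s <= l)%N then (odd_poly h)`_(l - s) else 0.
Proof.
rewrite /Mentry /= odd_double /= doubleK.
case: leqP => [le_sl | lt_ls]; last by rewrite horner_phi_nonpos //; lia.
rewrite (_ : 2 * (l.+1%:Z - s.+1%:Z) + 2 = Posz ((l - s).*2).+2); last by lia.
by rewrite horner_phi_pos (coef_odd_poly (R := C)).
Qed.

Lemma horner_Mentry_even_row (s l : nat) :
  (Mentry n f s.*2.+2 l.+1).[c]
  = if (s <= l)%N then (even_poly h)`_(l - s) else 0.
Proof.
rewrite /Mentry /= odd_double /= doubleK.
case: leqP => [le_sl | lt_ls]; last by rewrite horner_phi_nonpos //; lia.
rewrite (_ : 2 * (l.+1%:Z - s.+1%:Z) + 1 = Posz ((l - s).*2).+1); last by lia.
by rewrite horner_phi_pos (coef_even_poly (R := C)).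
Qed.

Variable u : C.
Hypotheses (even_root : root (even_poly h) u) (odd_root : root (odd_poly h) u).

Lemma Mentry_row_kernel (rho : nat) : (rho < n - 2)%N ->
  \sum_(l < n - 2) u ^+ l * (Mentry n f rho.+1 l.+1).[c] = 0.
Proof.
have size_h := size_shift_quot.
rewrite -(odd_double_half rho); move: (rho./2) => s.
case: (odd rho) => /= lt_rho.
- have size_even : (size (even_poly h) + s <= n - 2)%N.
    by have := size_even_poly h; lia.
  under eq_bigr => l _ do rewrite horner_Mentry_even_row.
  by rewrite (@sum_shifted_coef C _ _ _ _ size_even) (rootP even_root) mulr0.
- have size_odd : (size (odd_poly h) + s <= n - 2)%N.
    by have := size_odd_poly h; lia.
  under eq_bigr => l _ do rewrite horner_Mentry_odd_row.
  by rewrite (@sum_shifted_coef C _ _ _ _ size_odd) (rootP odd_root) mulr0.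
Qed.

Lemma Hpoly_shifted_root : (3 <= n)%N -> (Hpoly n f).[c] = 0.
Proof.
move=> n3; rewrite /Hpoly -[(\det _).[c]]/(horner_eval c (\det _)) -det_map_mx.
apply/eqP; rewrite -det_tr; apply/det0P; exists (\row_(l < n - 2) u ^+ l).
  have N0 : (0 < n - 2)%N by lia.
  apply/eqP => /rowP /(_ (Ordinal N0)); rewrite !mxE expr0 => /eqP.
  by rewrite oner_eq0.
apply/rowP => rho; rewrite !mxE -[RHS](Mentry_row_kernel _ (ltn_ord rho)).
by apply: eq_bigr => l _; rewrite !mxE.
Qed.

End MatrixAtShiftedRoot.

Theorem lemma1 (n : nat) (r : 'I_n -> C) (i j k : 'I_n) :
  (3 <= n)%N ->
  let f := \prod_(t < n) ('X - (r t)%:P) in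
  (i < j)%N -> j != k -> k != i ->
  r k = (r i + r j) / 2 ->
  (Hpoly n f).[r k] = 0.
Proof.
move=> n3 f lt_ij neq_jk neq_ki rk_mid.
set c := r k; set d := (r j - r i) / 2.
have [Q fQ] : exists Q,
    f = ('X - (c - d)%:P) * ('X - (c + d)%:P) * ('X - c%:P) * Q.
  have -> : c - d = r i by rewrite /c /d rk_mid; field.
  have -> : c + d = r j by rewrite /c /d rk_mid; field.
  have neq_ji : j != i by rewrite neq_ltn lt_ij orbT.
  rewrite /f (bigD1 i) //= (bigD1 j) //= (bigD1 k) /=; last first.
    by rewrite neq_ki eq_sym.
  by eexists; rewrite !mulrA.
have size_f : (size f <= n.+1)%N.
  by rewrite /f size_prod_XsubC [index_enum _]unlock -enumT size_enum_ord.
pose h := (Q \Po ('X + c%:P)) * ('X^2 - (d ^+ 2)%:P).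
have f_shift : f \Po ('X + c%:P) = h * 'X.
  by rewrite fQ comp_XaddC_symmetric_roots.
have even_root : root (even_poly h) (d ^+ 2).
  by rewrite /root /h (@even_polyMX2subC C) hornerM hornerXsubC subrr mulr0.
have odd_root : root (odd_poly h) (d ^+ 2).
  by rewrite /root /h (@odd_polyMX2subC C) hornerM hornerXsubC subrr mulr0.
exact: Hpoly_shifted_root size_f f_shift _ even_root odd_root n3.
Qed.
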